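(* Let $A$ be an $n$-by-$n$ doubly nonnegative matrix, written as $A=UDU^T$ with $U=[u_{ij}]$ real orthogonal and $D=\mathrm{diag}(\lambda_1,\dots,\lambda_n)$, $\lambda_1\ge\lambda_2\ge\cdots\ge\lambda_n\ge 0$, and let $W=[w_{ij}]$ be the corresponding sign change matrix. Then every diagonal entry of $W$ is zero, every row and every column of $W$ contains at most one entry equal to $n-1$, and all remaining entries of $W$ are at most $n-2$.
   Context: A real matrix is doubly nonnegative if it is symmetric, positive semidefinite, and entry-wise nonnegative. With $A=UDU^T$ as in the claim and $t>0$, $A^t=UD^tU^T$, so $(A^t)_{ij}=u_{i1}u_{j1}\lambda_1^t+\cdots+u_{in}u_{jn}\lambda_n^t$, an exponential polynomial in $t$. The sign change matrix $W=[w_{ij}]$ is defined by letting $w_{ij}$ be the number of sign changes in the sequence of coefficients $(u_{i1}u_{j1},u_{i2}u_{j2},\dots,u_{in}u_{jn})$ of this exponential polynomial, arranged in decreasing order of the corresponding eigenvalues (zero coefficients being ignored when counting sign changes). *)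

From HB Require Import structures.
From mathcomp Require Import all_boot all_order all_algebra.
Set Implicit Arguments. Unset Strict Implicit. Unset Printing Implicit Defensive.
Import Order.TTheory GRing.Theory Num.Theory.
Local Open Scope ring_scope.

Definition doubly_nonnegative (R : realFieldType) (n : nat) (A : 'M[R]_n) : Prop :=
  [/\ A^T = A,
      (forall x : 'cV[R]_n, 0 <= (x^T *m A *m x) 0 0)
    & (forall i j, 0 <= A i j)].

Definition sign_changes (R : realFieldType) (s : seq R) : nat :=
  let t := [seq x <- s | x != 0] in
  count (fun p : R * R => p.1 * p.2 < 0) (zip t (behead t)).

Definition sign_change_matrix (R : realFieldType) (n : nat) (U : 'M[R]_n)
  : 'M[nat]_n :=
  \matrix_(i, j) sign_changes [seq U i k * U j k | k <- enum 'I_n].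

From HB Require Import structures.
From mathcomp Require Import all_boot all_order all_algebra.
From mathcomp Require Import zify ring.
Import Order.TTheory GRing.Theory Num.Theory.
Local Open Scope ring_scope.

(* Only the orthogonality of U matters.  A sequence of length n has at most n - 1 sign
   changes, and exactly n - 1 only if it strictly alternates.  Row i of W
   cannot contain two such entries w_ij and w_ik with j <> k: the termwise
   product of the two alternating sequences (u_im u_jm) and (u_im u_km) never
   changes sign, so u_jm u_km has constant strict sign and the rows j and k of
   U could not be orthogonal. *)

Lemma size_zip_behead (T : Type) (s : seq T) :
  size (zip s (behead s)) = (size s).-1.
Proof. by rewrite size_zip size_behead; lia. Qed.

Section SignChanges.

Context {R : realFieldType}.
Implicit Types s : seq R.

Definition alternating s := forall m, (m.+1 < size s)%N -> s`_m * s`_m.+1 < 0.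

Lemma sign_changes_le s : (sign_changes s <= (size s).-1)%N.
Proof.
rewrite /sign_changes; apply: leq_trans (count_size _ _) _.
by rewrite size_zip_behead size_filter -!subn1 leq_sub2r ?count_size.
Qed.

Lemma sign_changes_max_alternating s :
  sign_changes s = (size s).-1 -> alternating s.
Proof.
rewrite /sign_changes; set t := filter _ s => hmax m hm.
have count_max :=
  count_size (fun p : R * R => p.1 * p.2 < 0) (zip t (behead t)).
have size_t : size t = size s.
  have : (size t <= size s)%N by rewrite size_filter count_size.
  by move: count_max; rewrite hmax size_zip_behead; lia.
have t_eq_s : t = s.
  by apply/all_filterP; rewrite all_count -size_filter -/t size_t.
have /all_nthP adjacent_neg :
    all (fun p : R * R => p.1 * p.2 < 0) (zip s (behead s)).
  by rewrite all_count size_zip_behead -t_eq_s hmax size_t.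
have m_lt : (m < (size s).-1)%N by lia.
have := adjacent_neg (0, 0) m.
by rewrite nth_zip_cond size_zip_behead m_lt nth_behead; apply.
Qed.

Lemma sign_changes_nonneg s : all (>= 0) s -> sign_changes s = 0%N.
Proof.
move=> s_ge0; rewrite /sign_changes.
have : all (>= 0) [seq x <- s | x != 0].
  by apply/allP => x; rewrite mem_filter => /andP[_ /(allP s_ge0)].
move: (filter _ s) => {s_ge0} {}s s_ge0.
apply/eqP; rewrite -leqn0 leqNgt -has_count.
elim: s s_ge0 => [//|x [|y r] IH] //= /andP[x_ge0 yr_ge0].
by rewrite negb_or IH // andbT -leNgt mulr_ge0 //; case/andP: yr_ge0.
Qed.

Lemma mulr_gt0_trans (a b c : R) : 0 < a * b -> 0 < b * c -> 0 < a * c.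
Proof.
move=> ab_gt0 bc_gt0.
have b_neq0 : b != 0 by apply: contraTneq ab_gt0 => ->; rewrite mulr0 ltxx.
have : 0 < (b * b) * (a * c).
  have -> : (b * b) * (a * c) = (a * b) * (b * c) by ring.
  exact: mulr_gt0.
by rewrite pmulr_rgt0 // -expr2 exprn_even_gt0.
Qed.

Lemma alternating_nth_neq0 s m :
  alternating s -> (m.+1 < size s)%N -> s`_m != 0.
Proof.
by move=> alt m_lt; apply: contraTneq (alt m m_lt) => ->; rewrite mul0r ltxx.
Qed.

Lemma alternating_mul_sign s1 s2 :
  alternating s1 -> alternating s2 -> size s2 = size s1 -> (1 < size s1)%N ->
  forall m, (m < size s1)%N -> 0 < (s1`_0 * s2`_0) * (s1`_m * s2`_m).
Proof.
move=> alt1 alt2 size_eq size_gt1; elim=> [|m IH] m_lt.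
  by rewrite -expr2 exprn_even_gt0 // mulf_neq0 //
     alternating_nth_neq0 ?size_eq.
apply: mulr_gt0_trans (IH (ltnW m_lt)) _.
rewrite (_ : _ * _ = (s1`_m * s1`_m.+1) * (s2`_m * s2`_m.+1)); last by ring.
by rewrite nmulr_rgt0 ?alt1 // alt2 // size_eq.
Qed.

End SignChanges.

Section RowProducts.

Context {R : realFieldType} {n : nat} (U : 'M[R]_n).

Definition row_products i j := [seq U i m * U j m | m <- enum 'I_n].

Lemma size_row_products i j : size (row_products i j) = n.
Proof. by rewrite size_map size_enum_ord. Qed.

Lemma nth_row_products i j (m : 'I_n) : (row_products i j)`_m = U i m * U j m.
Proof. by rewrite (nth_map m) ?size_enum_ord // nth_ord_enum. Qed.

Lemma sign_change_matrixE i j :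
  sign_change_matrix U i j = sign_changes (row_products i j).
Proof. by rewrite mxE. Qed.

Lemma sign_change_matrix_diag i : sign_change_matrix U i i = 0%N.
Proof.
rewrite sign_change_matrixE sign_changes_nonneg //.
by apply/allP => _ /mapP[m _ ->]; rewrite -expr2 sqr_ge0.
Qed.

Lemma sign_change_matrix_le i j : (sign_change_matrix U i j <= n.-1)%N.
Proof.
rewrite sign_change_matrixE -[in X in (_ <= X)%N](size_row_products i j).
exact: sign_changes_le.
Qed.

Lemma sign_change_matrix_max_alternating i j :
  sign_change_matrix U i j = n.-1 -> alternating (row_products i j).
Proof.
rewrite sign_change_matrixE -[in RHS](size_row_products i j).
exact: sign_changes_max_alternating.
Qed.

Lemma sign_change_matrixC i j :
  sign_change_matrix U i j = sign_change_matrix U j i.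
Proof.
by rewrite !sign_change_matrixE /row_products; under eq_map do rewrite mulrC.
Qed.

Hypothesis U_orthogonal : U *m U^T = 1%:M.

Lemma row_products_alternating_eq i j k :
  alternating (row_products i j) -> alternating (row_products i k) -> j = k.
Proof.
move=> alt_j alt_k; have [n_le1 | n_gt1] := leqP n 1.
  by apply: ord_inj; have := ltn_ord j; have := ltn_ord k; lia.
apply/eqP; apply: contraT => j_neq_k.
have := alternating_mul_sign _ _ alt_j alt_k.
rewrite !size_row_products => /(_ erefl n_gt1) same_sign.
set c := _ * _ in same_sign.
have jk_sign (m : 'I_n) : 0 < c * (U j m * U k m).
  have := same_sign m (ltn_ord m); rewrite !nth_row_products.
  rewrite (_ : _ * _ = U i m ^+ 2 * (c * (U j m * U k m))); last by ring.
  have [->|Uim_neq0] := eqVneq (U i m) 0; first by rewrite expr0n mul0r ltxx.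
  by rewrite pmulr_rgt0 // exprn_even_gt0.
have jk_orth : \sum_m U j m * U k m = 0.
  have := congr1 (fun M : 'M[R]_n => M j k) U_orthogonal.
  rewrite !mxE (negbTE j_neq_k) mulr0n => sum_eq0.
  by rewrite -[RHS]sum_eq0; apply: eq_bigr => m _; rewrite mxE.
have sum_c : \sum_m c * (U j m * U k m) = 0 by rewrite -mulr_sumr jk_orth mulr0.
have m0 : 'I_n := Ordinal (ltnW n_gt1).
have := psumr_eq0P (i := m0) (fun m _ => ltW (jk_sign m)) sum_c isT.
by move=> /eqP; rewrite gt_eqF ?jk_sign.
Qed.

Lemma sign_change_matrix_max_unique i j k :
  sign_change_matrix U i j = n.-1 -> sign_change_matrix U i k = n.-1 -> j = k.
Proof.
move=> /sign_change_matrix_max_alternating alt_j.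
move=> /sign_change_matrix_max_alternating.
exact: row_products_alternating_eq.
Qed.

End RowProducts.

Theorem lemma2p3 (R : realFieldType) (n : nat) (A U : 'M[R]_n) (lam : 'I_n -> R)
  (hA : doubly_nonnegative A)
  (hU : U *m U^T = 1%:M)
  (hdec : A = U *m diag_mx (\row_i lam i) *m U^T)
  (hord : forall i j : 'I_n, (i <= j)%N -> lam j <= lam i)
  (hlam : forall i, 0 <= lam i) :
  let W := sign_change_matrix U in
  [/\ (forall i, W i i = 0%N),
      (forall i j k, W i j = n.-1 -> W i k = n.-1 -> j = k),
      (forall i j k, W i j = n.-1 -> W k j = n.-1 -> i = k)
    & (forall i j, W i j <> n.-1 -> (W i j <= n.-2)%N)].
Proof.
move=> W; split.
- exact: sign_change_matrix_diag.
- exact: sign_change_matrix_max_unique.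
- move=> i j k; rewrite /W !(sign_change_matrixC _ _ j).
  exact: sign_change_matrix_max_unique.
- by move=> i j; have := sign_change_matrix_le U i j; rewrite /W; lia.
Qed.
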